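(* Let $p\ge 2$ and $q$ be coprime integers, $I_1,I_3>0$, $\eta=I_1/I_3-1$. For every $h\in C$ define $$t_{\max}(h)=\frac{2I_1\,\min\big(\pi,\tau_\ell(\bar h_3)\big)}{|h|}.$$ Then $t_{\max}(h)\le t_{\mathrm{conj}}(h)$ for every $h\in C$, where $t_{\mathrm{conj}}(h)$ is the first conjugate time along the unit-speed geodesic $\gamma_h$ (i.e., the smallest $t>0$ such that $\gamma_h(t)$ is conjugate to $\gamma_h(0)$ along $\gamma_h$, or $+\infty$ if none).
   Context: Identify $S^3=\{(z,w)\in\mathbb{C}^2:|z|^2+|w|^2=1\}$ with $\mathrm{SU}_2$ via $(z,w)\mapsto\begin{pmatrix} z& w\\ -\bar w&\bar z\end{pmatrix}$, write $z=q_0+iq_3$, $w=q_1+iq_2$. The basis of $\mathfrak{su}_2$ is $e_1=\frac12\begin{pmatrix}0&1\\-1&0\end{pmatrix}$, $e_2=\frac12\begin{pmatrix}0&i\\ i&0\end{pmatrix}$, $e_3=\frac12\begin{pmatrix}i&0\\0&-i\end{pmatrix}$. The metric $g$ is the left-invariant metric on $\mathrm{SU}_2$ equal to $I_1u_1^2+I_1u_2^2+I_3u_3^2$ at the identity on $u_1e_1+u_2e_2+u_3e_3$; it is invariant under the $\mathbb{Z}_p$-action $[k]\cdot(z,w)=(e^{2\pi ik/p}z,e^{2\pi ikq/p}w)$, so it descends to $L(p;q)=S^3/\mathbb{Z}_p$ (projection $\Pi$); conjugate points along a geodesic are the same upstairs and downstairs. Let $C=\{h=(h_1,h_2,h_3)\in\mathfrak{su}_2^*: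 \frac{h_1^2+h_2^2}{I_1}+\frac{h_3^2}{I_3}=1\}$ (coordinates in the dual basis); each $h\in C$ determines the arclength-parametrized geodesic $\gamma_h$ of $(\mathrm{SU}_2,g)$ from the identity (the projection of the Hamiltonian flow of $H=\frac12(\frac{h_1^2+h_2^2}{I_1}+\frac{h_3^2}{I_3})$ starting at $h$). Put $|h|=\sqrt{h_1^2+h_2^2+h_3^2}$, $\bar h_i=h_i/|h|$, $\tau=2I_1t/|h|$; note $|h|=\sqrt{I_1}/\sqrt{1+\eta\bar h_3^2}$. Along $\gamma_h$: $q_0=\cos\tau\cos(\tau\eta\bar h_3)-\bar h_3\sin\tau\sin(\tau\eta\bar h_3)$, $q_3=\cos\tau\sin(\tau\eta\bar h_3)+\bar h_3\sin\tau\cos(\tau\eta\bar h_3)$. Define $\ell_\mp(\tau,s)=\cos\tau\sin(\tau\eta s\mp\frac{\pi}{p})+s\sin\tau\cos(\tau\eta s\mp\frac{\pi}{p})$ (these equal $q_3\cos\frac\pi p\mp q_0\sin\frac\pi p$ along $\gamma_h$ with $s=\bar h_3$), let $\tau_\ell^\mp(s)$ be the smallest positive root in $\tau$ of $\ell_\mp(\tau,s)=0$ and $\tau_\ell(s)=\min(\tau_\ell^-(s),\tau_\ell^+(s))$. *)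

From HB Require Import structures.
From mathcomp Require Import all_boot all_order all_algebra.
From mathcomp Require Import all_classical all_reals all_analysis.
Set Implicit Arguments. Unset Strict Implicit. Unset Printing Implicit Defensive.
Import Order.TTheory GRing.Theory Num.Theory.
Import numFieldNormedType.Exports.
Local Open Scope classical_set_scope.
Local Open Scope ring_scope.

Section LensDefs.
Variable R : realType.

(* coordinates h_1, h_2, h_3 of h in the dual basis (1-indexed as in the paper) *)
Definition hc (h : 'rV[R]_3) (k : nat) : R := h 0 (inord k.-1).

Definition hnorm (h : 'rV[R]_3) : R :=
  Num.sqrt (hc h 1 ^+ 2 + hc h 2 ^+ 2 + hc h 3 ^+ 2).

Definition hbar (h : 'rV[R]_3) (k : nat) : R := hc h k / hnorm h.

Definition eta (I1 I3 : R) : R := I1 / I3 - 1.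

Definition inC (I1 I3 : R) (h : 'rV[R]_3) : Prop :=
  (hc h 1 ^+ 2 + hc h 2 ^+ 2) / I1 + hc h 3 ^+ 2 / I3 = 1.

(* The geodesic gamma_h(t) of (SU_2, g) from the identity, in coordinates
   (q0, q1, q2, q3) with z = q0 + i q3, w = q1 + i q2.  It is
   gamma_h(t) = exp(t (h1 e1 + h2 e2 + h3 e3)/I1) exp(t h3 (1/I3 - 1/I1) e3),
   the solution of the Euler-Arnold (Hamiltonian) equations
   g' = g u, h' = h x u, u = (h1/I1, h2/I1, h3/I3), g(0) = id, h(0) = h.
   The formula makes sense for every h <> 0 (and is unit-speed for h in C);
   gamma_{lambda h}(t) = gamma_h(lambda t). *)
Definition gam (I1 I3 : R) (h : 'rV[R]_3) (t : R) : 'rV[R]_4 :=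
  let th := t * hnorm h / (2 * I1) in
  let ph := th * eta I1 I3 * hbar h 3 in
  let q0 := cos th * cos ph - hbar h 3 * sin th * sin ph in
  let q3 := cos th * sin ph + hbar h 3 * sin th * cos ph in
  let q1 := sin th * (hbar h 1 * cos ph + hbar h 2 * sin ph) in
  let q2 := sin th * (hbar h 2 * cos ph - hbar h 1 * sin ph) in
  \row_(i < 4) nth 0 [:: q0; q1; q2; q3] i.

(* gamma_h(t) is conjugate to gamma_h(0) along gamma_h: the exponential map
   is critical at t*v_h, i.e. the differential at h of h' |-> gamma_{h'}(t)
   (which equals Exp(t * u(h')) with u a linear isomorphism) is singular. *)
Definition conjugate_at (I1 I3 : R) (h : 'rV[R]_3) (t : R) : Prop :=
  differentiable (fun h' : 'rV[R]_3 => gam I1 I3 h' t) h /\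
  exists v : 'rV[R]_3, v != 0 /\ 'd (fun h' : 'rV[R]_3 => gam I1 I3 h' t) h v = 0.

Definition t_conj (I1 I3 : R) (h : 'rV[R]_3) : \bar R :=
  ereal_inf [set t%:E | t in [set t : R | 0 < t /\ conjugate_at I1 I3 h t]].

(* ell_-(tau,s) for sg = 1, ell_+(tau,s) for sg = -1 *)
Definition ell (p : nat) (et sg tau s : R) : R :=
  cos tau * sin (tau * et * s - sg * (pi / p%:R))
  + s * sin tau * cos (tau * et * s - sg * (pi / p%:R)).

Definition tau_ell_pm (p : nat) (et sg s : R) : \bar R :=
  ereal_inf [set t%:E | t in [set t : R | 0 < t /\ ell p et sg t s = 0]].

Definition tau_ell (p : nat) (et s : R) : \bar R :=
  Order.min (tau_ell_pm p et 1 s) (tau_ell_pm p et (-1) s).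

Definition t_max (p : nat) (I1 I3 : R) (h : 'rV[R]_3) : R :=
  2 * I1 * fine (Order.min (pi%:E) (tau_ell p (eta I1 I3) (hbar h 3))) / hnorm h.

End LensDefs.

From Pilot Require Import Defs.
From HB Require Import structures.
From mathcomp Require Import all_boot all_order all_algebra.
From mathcomp Require Import all_classical all_reals all_analysis.
From mathcomp Require Import ring lra.
Import Order.TTheory GRing.Theory Num.Theory.
Import numFieldNormedType.Exports.
Local Open Scope classical_set_scope.
Local Open Scope ring_scope.
Set Implicit Arguments. Unset Strict Implicit.

(* Put tau = t|h|/(2 I1), s = hbar_3 and phi = tau eta s.  The point gamma_h(t) depends
   on h through tau, the unit vector hbar and phi only, and its coordinate pairs (q0, q3)
   and (q2, q1) are the rotations by the angle phi of (cos tau, s sin tau) and of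
   (hbar_2 sin tau, hbar_1 sin tau).  Differentiating along a direction v annihilated by
   the differential, the rotations drop out and the remaining linear system for the
   variations of tau, phi and hbar forces v = 0 as soon as sin tau, 1 + eta s^2 and
     F(tau) = (1 + eta s^2) sin tau + eta (1 - s^2) tau cos tau
   do not vanish.  For 0 < tau < pi the first two are positive, and so is F: if
   eta <= 0 because tau cos tau <= sin tau, and if eta > 0 because then tau_ell <= pi/2
   (ell_- or ell_+ changes sign on (0, pi/2]), so that tau < tau_ell forces
   cos tau >= 0.  Hence no time below t_max is conjugate. *)

Lemma rotation_eq0 (R : comRingType) (c s x y : R) :
  c ^+ 2 + s ^+ 2 = 1 -> x * c - y * s = 0 -> x * s + y * c = 0 -> x = 0 /\ y = 0.
Proof.
move=> cs1 e1 e2; split.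
- rewrite -[x]mulr1 -cs1 (_ : _ * _ = c * (x * c - y * s) + s * (x * s + y * c)); last by ring.
  by rewrite e1 e2 !mulr0 addr0.
- rewrite -[y]mulr1 -cs1 (_ : _ * _ = c * (x * s + y * c) - s * (x * c - y * s)); last by ring.
  by rewrite e1 e2 !mulr0 subr0.
Qed.

Section Calculus.
Variable R : realType.
Implicit Types (f g : R -> R) (x df dg : R).

Lemma is_derive_mul f g x df dg :
  is_derive x 1 f df -> is_derive x 1 g dg ->
  is_derive x 1 (fun y => f y * g y) (df * g x + f x * dg).
Proof.
move=> fd gd; apply: is_derive_eq (is_deriveM fd gd) _.
by rewrite /GRing.scale /=; ring.
Qed.

Lemma is_derive_cos_comp f x df :
  is_derive x 1 f df -> is_derive x 1 (fun y => cos (f y)) (- sin (f x) * df).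
Proof. exact: (@is_derive1_comp _ cos f). Qed.

Lemma is_derive_sin_comp f x df :
  is_derive x 1 f df -> is_derive x 1 (fun y => sin (f y)) (cos (f x) * df).
Proof. exact: (@is_derive1_comp _ sin f). Qed.

Lemma is_derive_rotate (a b P : R -> R) x da db dP :
  is_derive x 1 a da -> is_derive x 1 b db -> is_derive x 1 P dP ->
  let u := da - b x * dP in let w := db + a x * dP in
  is_derive x 1 (fun y => a y * cos (P y) - b y * sin (P y))
    (u * cos (P x) - w * sin (P x)) /\
  is_derive x 1 (fun y => a y * sin (P y) + b y * cos (P y))
    (u * sin (P x) + w * cos (P x)).
Proof.
move=> ad bd Pd u w; have cd := is_derive_cos_comp Pd; have sd := is_derive_sin_comp Pd.
split.
- apply: is_derive_eq (is_deriveB (is_derive_mul ad cd) (is_derive_mul bd sd)) _.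
  by rewrite /u /w; ring.
- apply: is_derive_eq (is_deriveD (is_derive_mul ad sd) (is_derive_mul bd cd)) _.
  by rewrite /u /w; ring.
Qed.

Lemma mulr_cos_le_sin x : 0 <= x <= pi -> x * cos x <= sin x.
Proof.
move=> /andP[x0 xpi].
pose g := fun y : R => sin y - y * cos y.
have gd (y : R) : is_derive y 1 g (y * sin y).
  apply: is_derive_eq (is_deriveB (is_derive_sin y)
    (is_derive_mul (is_derive_id y 1) (is_derive_cos y))) _.
  by ring.
suff : g 0 <= g x by rewrite /g sin0 mul0r subr0 subr_ge0.
apply: (@ger0_derive1_ndecr _ g 0 pi) => //.
- move=> y; rewrite in_itv /= => /andP[y0 ypi].
  rewrite derive1E derive_val mulr_ge0 ?(ltW y0) //.
  by rewrite sin_ge0_pi // (ltW y0) ltW.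
- apply: continuous_subspaceT => y.
  by apply/differentiable_continuous/derivable1_diffP; case: (gd y).
Qed.

Lemma rotate_stationary (a b P : R -> R) (x da db dP : R) :
  is_derive x 1 a da -> is_derive x 1 b db -> is_derive x 1 P dP ->
  'D_1 (fun y => a y * cos (P y) - b y * sin (P y)) x = 0 ->
  'D_1 (fun y => a y * sin (P y) + b y * cos (P y)) x = 0 ->
  da - b x * dP = 0 /\ db + a x * dP = 0.
Proof.
move=> ad bd Pd; have [d1 d2] := is_derive_rotate ad bd Pd.
rewrite !derive_val.
exact: rotation_eq0 (cos2Dsin2 (P x)).
Qed.
End Calculus.

Section Directional.
Variables (R : realType) (V : normedModType R).

Lemma derive_along_line (W : normedModType R) (g : V -> W) (a v : V) :
  'D_v g a = 'D_1 (fun e : R => g (e *: v + a)) 0.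
Proof.
rewrite /derive /= scale0r add0r.
by under [in RHS]eq_fun => h do rewrite addr0 [h%:A]mulr1.
Qed.

Lemma diff_mx_entry m n (f : V -> 'M[R]_(m, n)) (a v : V) i j :
  differentiable f a -> 'd f a v i j = 'D_1 (fun e : R => f (e *: v + a) i j) 0.
Proof.
move=> fa; rewrite -deriveE // derive_mx ?mxE; last exact: diff_derivable.
exact: derive_along_line.
Qed.
End Directional.

Section ConjugacyFactor.
Variable R : realType.
Implicit Types (et s tau : R).

Definition conj_factor et s tau : R :=
  (1 + et * s ^+ 2) * sin tau + et * (1 - s ^+ 2) * tau * cos tau.

Lemma add1_mul_sqr_gt0 et s : -1 < et -> s ^+ 2 <= 1 -> 0 < 1 + et * s ^+ 2.
Proof.
move=> et_gt s_le; have [et_ge|et_lt] := leP 0 et.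
  have : 0 <= et * s ^+ 2 by rewrite mulr_ge0 ?sqr_ge0.
  lra.
have : 0 <= - et * (1 - s ^+ 2) by rewrite mulr_ge0 // ?oppr_ge0 ?subr_ge0 // ltW.
nra.
Qed.

Lemma conj_factor_gt0 et s tau : -1 < et -> s ^+ 2 <= 1 -> 0 < tau < pi ->
  (0 < et -> tau <= pi / 2) -> 0 < conj_factor et s tau.
Proof.
move=> et_gt s_le /andP[tau_gt tau_lt] et_pos.
have S0 : 0 < sin tau by rewrite sin_gt0_pi // tau_gt.
have m0 := add1_mul_sqr_gt0 et_gt s_le.
rewrite /conj_factor; have [et_le|et_gt0] := leP et 0.
- have tcs : tau * cos tau <= sin tau.
    by rewrite mulr_cos_le_sin // (ltW tau_gt) (ltW tau_lt).
  rewrite (_ : _ + _ = (1 + et) * sin tau + - et * (1 - s ^+ 2) * (sin tau - tau * cos tau));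
    last by ring.
  rewrite ltr_wpDr ?mulr_ge0 ?subr_ge0 ?oppr_ge0 // mulr_gt0 //; lra.
- have c0 : 0 <= cos tau.
    by rewrite cos_ge0_pihalf // et_pos // andbT; have := pi_gt0 R; lra.
  by rewrite ltr_wpDr ?mulr_gt0 // !mulr_ge0 ?subr_ge0 // ltW.
Qed.

Lemma conj_kernel_eq0 et b tau dT dP dB :
  sin tau != 0 -> conj_factor et b tau != 0 -> 1 + et * b ^+ 2 != 0 ->
  dP = et * (dT * b + tau * dB) ->
  - sin tau * dT - b * sin tau * dP = 0 ->
  dB * sin tau + b * (cos tau * dT) + cos tau * dP = 0 ->
  [/\ dT = 0, dP = 0 & dB = 0].
Proof.
move=> S0 F0 m0 dPE u0 w0.
have E0 : dT + b * dP = 0.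
  have : - sin tau * (dT + b * dP) = 0 by rewrite -u0; ring.
  by move/eqP; rewrite mulf_eq0 oppr_eq0 (negbTE S0) => /eqP.
have H0 : dP - et * (dT * b + tau * dB) = 0 by rewrite -dPE subrr.
(* Eliminating dT and dP from the third equation leaves conj_factor * dB. *)
have dB0 : dB = 0.
  have : conj_factor et b tau * dB = 0.
    rewrite (_ : _ * _ = (1 + et * b ^+ 2) * (dB * sin tau + b * (cos tau * dT) + cos tau * dP)
      - cos tau * (1 - b ^+ 2) * (dP - et * (dT * b + tau * dB))
      - cos tau * b * (1 + et) * (dT + b * dP)); last by rewrite /conj_factor; ring.
    by rewrite w0 H0 E0 !mulr0 !subr0.
  by move/eqP; rewrite mulf_eq0 (negbTE F0) => /eqP.
have dP0 : dP = 0.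
  have : (1 + et * b ^+ 2) * dP = 0.
    rewrite (_ : _ * _ = (dP - et * (dT * b + tau * dB)) + et * b * (dT + b * dP) + et * tau * dB);
      last by ring.
    by rewrite H0 E0 dB0 !mulr0 !addr0.
  by move/eqP; rewrite mulf_eq0 (negbTE m0) => /eqP.
by split => //; move: E0; rewrite dP0 mulr0 addr0.
Qed.
End ConjugacyFactor.

Lemma row3_eq0 (R : realType) (v : 'rV[R]_3) :
  hc v 1 = 0 -> hc v 2 = 0 -> hc v 3 = 0 -> v = 0.
Proof.
move=> v1 v2 v3; apply/rowP => j; rewrite mxE -[j]inord_val.
by case: j => -[|[|[|//]]].
Qed.

Lemma is_derive_hc_line (R : realType) (h v : 'rV[R]_3) k (x : R) :
  is_derive x 1 (fun e => hc (e *: v + h) k) (hc v k).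
Proof.
rewrite (_ : (fun e => _) = fun e => e * hc v k + hc h k); last first.
  by apply: funext => e; rewrite /hc !mxE.
apply: is_derive_eq (is_deriveD (is_derive_mul (is_derive_id x 1)
  (is_derive_cst (hc v k) x 1)) (is_derive_cst (hc h k) x 1)) _.
by rewrite /cst; ring.
Qed.

Section GeodesicVariation.
Variables (R : realType) (I1 I3 t : R) (h v : 'rV[R]_3).
Hypotheses (t_gt0 : 0 < t) (I1_gt0 : 0 < I1) (hnorm_gt0 : 0 < hnorm h).

Let N (e : R) := hnorm (e *: v + h).
Let B k (e : R) := hbar (e *: v + h) k.
Let T (e : R) := t * N e / (2 * I1).
Let P (e : R) := T e * Defs.eta I1 I3 * B 3 e.
Let dN := 'D_1 N 0.
Let tau := t * hnorm h / (2 * I1).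

Let N0 : N 0 = hnorm h. Proof. by rewrite /N scale0r add0r. Qed.

Lemma derivable_hnorm_line : derivable N 0 1.
Proof.
pose sq k := is_derive_mul (is_derive_hc_line h v k 0) (is_derive_hc_line h v k 0).
pose q e := hc (e *: v + h) 1 ^+ 2 + hc (e *: v + h) 2 ^+ 2 + hc (e *: v + h) 3 ^+ 2.
have q0 : 0 < q 0 by rewrite -sqrtr_gt0 -[X in _ < X]/(N 0) N0.
have qd : is_derive (0 : R) 1 q _ := is_deriveD (is_deriveD (sq 1%N) (sq 2%N)) (sq 3%N).
by case: (is_derive1_comp (g := q) (is_derive1_sqrt q0) qd).
Qed.

Let is_derive_hnorm_line : is_derive (0 : R) 1 N dN.
Proof. exact/derivableP/derivable_hnorm_line. Qed.

Lemma is_derive_hbar_line k :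
  is_derive (0 : R) 1 (B k) ((hc v k - hbar h k * dN) / hnorm h).
Proof.
have N0_neq0 : N 0 != 0 by rewrite N0 gt_eqF.
apply: is_derive_eq (is_derive_mul (is_derive_hc_line h v k 0)
  (is_deriveV N0_neq0 is_derive_hnorm_line)) _.
rewrite N0 scale0r add0r /hbar /GRing.scale /=.
by field; rewrite gt_eqF.
Qed.

Lemma is_derive_tau_line : is_derive (0 : R) 1 T (t * dN / (2 * I1)).
Proof.
apply: is_derive_eq (is_derive_mul (is_derive_mul (is_derive_cst t (0 : R) 1) is_derive_hnorm_line)
  (is_derive_cst (2 * I1)^-1 (0 : R) 1)) _.
by rewrite /cst; ring.
Qed.

Lemma is_derive_phi_line :
  is_derive (0 : R) 1 P (Defs.eta I1 I3 * (t * dN / (2 * I1) * hbar h 3 +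
                     tau * ((hc v 3 - hbar h 3 * dN) / hnorm h))).
Proof.
apply: is_derive_eq (is_derive_mul (is_derive_mul is_derive_tau_line
  (is_derive_cst (Defs.eta I1 I3) (0 : R) 1)) (is_derive_hbar_line 3)) _.
by rewrite /cst /T /B /tau -/(N 0) N0 scale0r add0r; ring.
Qed.

Lemma gam_lineE :
  [/\ (fun e => gam I1 I3 (e *: v + h) t 0 0) =
        (fun e => cos (T e) * cos (P e) - B 3 e * sin (T e) * sin (P e)),
      (fun e => gam I1 I3 (e *: v + h) t 0 3) =
        (fun e => cos (T e) * sin (P e) + B 3 e * sin (T e) * cos (P e)),
      (fun e => gam I1 I3 (e *: v + h) t 0 2) =
        (fun e => sin (T e) * B 2 e * cos (P e) - sin (T e) * B 1 e * sin (P e)) &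
      (fun e => gam I1 I3 (e *: v + h) t 0 1) =
        (fun e => sin (T e) * B 2 e * sin (P e) + sin (T e) * B 1 e * cos (P e))].
Proof. by split; apply: funext => e; rewrite /gam /T /P /B /N mxE /=; ring. Qed.

Lemma gam_differential_injective :
  sin tau != 0 -> conj_factor (Defs.eta I1 I3) (hbar h 3) tau != 0 ->
  1 + Defs.eta I1 I3 * hbar h 3 ^+ 2 != 0 ->
  differentiable (fun g => gam I1 I3 g t) h ->
  'd (fun g => gam I1 I3 g t) h v = 0 -> v = 0.
Proof.
move=> S0 F0 m0 gd dv.
have entry (i : 'I_4) : 'D_1 (fun e : R => gam I1 I3 (e *: v + h) t 0 i) 0 = 0.
  by have := diff_mx_entry v 0 i gd; rewrite dv mxE => /esym.
have [c0 c3 c2 c1] := gam_lineE.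
move: (entry 0) (entry 3) (entry 2) (entry 1); rewrite c0 c3 c2 c1 => e0 e3 e2 e1.
have T0 : T 0 = tau by rewrite /T N0.
have B0 k : B k 0 = hbar h k by rewrite /B scale0r add0r.
have Td := is_derive_tau_line; have Pd := is_derive_phi_line.
have Sd k := is_derive_mul (is_derive_sin_comp Td) (is_derive_hbar_line k).
have [u0 w0] := rotate_stationary (is_derive_cos_comp Td)
  (is_derive_mul (is_derive_hbar_line 3) (is_derive_sin_comp Td)) Pd e0 e3.
rewrite T0 !B0 in u0 w0.
have [dT0 dP0 dB30] := conj_kernel_eq0 S0 F0 m0 erefl u0 w0.
have [u2 w2] := rotate_stationary (Sd 2%N) (Sd 1%N) Pd e2 e1.
rewrite T0 dP0 dT0 !(mulr0, mul0r, add0r, addr0, subr0) in u2 w2.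
have dN0 : dN = 0.
  move/eqP: dT0; rewrite !mulf_eq0 invr_eq0 mulf_eq0 (gt_eqF t_gt0) (gt_eqF I1_gt0).
  by rewrite pnatr_eq0 /= ?orbF => /eqP.
have hc0 k : sin tau * ((hc v k - hbar h k * dN) / hnorm h) = 0 -> hc v k = 0.
  move/eqP; rewrite dN0 mulr0 subr0 !mulf_eq0 invr_eq0 (negbTE S0) (gt_eqF hnorm_gt0).
  by rewrite /= ?orbF => /eqP.
by apply: row3_eq0; apply: hc0 => //; rewrite dB30 mulr0.
Qed.

End GeodesicVariation.

Section LensRoots.
Variables (R : realType) (p : nat) (et : R).
Hypothesis p_ge2 : (2 <= p)%N.

Let b : R := pi / p%:R.

Let b_gt0 : 0 < b.
Proof. by rewrite divr_gt0 ?pi_gt0 // ltr0n (leq_trans _ p_ge2). Qed.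

Let b_le_pihalf : b <= pi / 2.
Proof.
by rewrite ler_pM2l ?pi_gt0 // lef_pV2 ?posrE ?ltr0n ?ler_nat // (leq_trans _ p_ge2).
Qed.

Lemma ell_continuous sg s : continuous (fun tau => ell p et sg tau s).
Proof.
move=> x; apply/differentiable_continuous/derivable1_diffP.
have lin : is_derive x 1 (fun tau => tau * et * s - sg * b) _ :=
  is_deriveB (is_derive_mul (is_derive_mul (is_derive_id x 1) (is_derive_cst et x 1))
    (is_derive_cst s x 1)) (is_derive_cst (sg * b) x 1).
by case: (is_deriveD (is_derive_mul (is_derive_cos x) (is_derive_sin_comp lin))
  (is_derive_mul (is_derive_mul (is_derive_cst s x 1) (is_derive_sin x))
    (is_derive_cos_comp lin))).
Qed.

Lemma ellN tau s : ell p et (-1) tau s = - ell p et 1 tau (- s).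
Proof.
rewrite /ell (_ : tau * et * - s - 1 * _ = - (tau * et * s - -1 * (pi / p%:R))); last by ring.
by rewrite sinN cosN; ring.
Qed.

Lemma tau_ell_pm_le_root sg s c :
  0 < c -> ell p et sg c s = 0 -> (tau_ell_pm p et sg s <= c%:E)%E.
Proof. by move=> c_gt0 c_root; apply: ereal_inf_lbound; exists c. Qed.

Lemma tau_ell_ge0 s : (0 <= tau_ell p et s)%E.
Proof.
rewrite le_min; apply/andP; split;
  by apply: le_ereal_inf_tmp => _ [x [x_gt0 _] <-]; rewrite lee_fin ltW.
Qed.

Hypothesis et_gt0 : 0 < et.

Lemma ell_minus_gt0 s : 0 < s -> exists2 t1, 0 < t1 <= pi / 2 & 0 < ell p et 1 t1 s.
Proof.
(* The phase of ell_- vanishes at b / (eta s); if that is beyond pi/2, then the phase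
   at pi/2 lies in (-b, 0). *)
move=> s_gt0; have es_gt0 : 0 < et * s by rewrite mulr_gt0.
have pi_gt0 := pi_gt0 R.
have [b_le|b_gt] := leP b (pi / 2 * (et * s)).
- exists (b / (et * s)); first by rewrite divr_gt0 //= ler_pdivrMr.
  rewrite /ell (_ : b / (et * s) * et * s - 1 * (pi / p%:R) = 0); last first.
    by rewrite -mulrA divfK ?gt_eqF // mul1r subrr.
  rewrite sin0 cos0 mulr0 add0r mulr1 mulr_gt0 // sin_gt0_pi // divr_gt0 //=.
  by apply: (@le_lt_trans _ _ (pi / 2)); [rewrite ler_pdivrMr | lra].
- exists (pi / 2); first by rewrite divr_gt0 //=.
  rewrite /ell cos_pihalf sin_pihalf mul0r add0r mulr1 mulr_gt0 // cos_gt0_pihalf //.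
  have := b_gt0; have := b_le_pihalf.
  by rewrite mul1r -/b => b_le b_pos; apply/andP; split; nra.
Qed.

Lemma ell_minus_root s : 0 <= s -> exists2 c, 0 < c <= pi / 2 & ell p et 1 c s = 0.
Proof.
have pi_gt0 := pi_gt0 R.
rewrite le_eqVlt => /predU1P[<-|s_gt0].
  by exists (pi / 2); [rewrite divr_gt0 //= | rewrite /ell cos_pihalf !mul0r add0r].
have [t1 /andP[t1_gt0 t1_le] ell_t1] := ell_minus_gt0 s_gt0.
have ell_0 : ell p et 1 0 s < 0.
  rewrite /ell !mul0r add0r cos0 sin0 mulr0 mul0r addr0 mul1r mul1r sinN oppr_lt0.
  by rewrite sin_gt0_pi // b_gt0 (le_lt_trans b_le_pihalf) //; lra.
have ell_le := ltW (lt_trans ell_0 ell_t1).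
have sign_change : Num.min (ell p et 1 0 s) (ell p et 1 t1 s) <= 0
                   <= Num.max (ell p et 1 0 s) (ell p et 1 t1 s).
  by rewrite (min_l ell_le) (max_r ell_le) !ltW.
have [c] := IVT (ltW t1_gt0) (continuous_subspaceT (@ell_continuous 1 s)) sign_change.
rewrite in_itv /= => /andP[c_ge0 c_le] c_root; exists c => //.
rewrite (le_trans c_le t1_le) andbT lt_neqAle c_ge0 andbT.
by apply/eqP => c0; rewrite -c0 in c_root; rewrite c_root ltxx in ell_0.
Qed.

Lemma tau_ell_le_pihalf s : (tau_ell p et s <= (pi / 2)%:E)%E.
Proof.
rewrite ge_min; have [s_ge0|s_lt0] := leP 0 s.
- have [c /andP[c_gt0 c_le] c_root] := ell_minus_root s_ge0.
  by rewrite (le_trans (tau_ell_pm_le_root c_gt0 c_root)) ?lee_fin.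
- have Ns_ge0 : 0 <= - s by rewrite oppr_ge0 ltW.
  have [c /andP[c_gt0 c_le] c_root] := ell_minus_root Ns_ge0.
  have c_root' : ell p et (-1) c s = 0 by rewrite ellN c_root oppr0.
  by rewrite (le_trans (tau_ell_pm_le_root c_gt0 c_root')) ?lee_fin ?orbT.
Qed.
End LensRoots.

Section Ellipsoid.
Variables (R : realType) (I1 I3 : R).

Lemma eta_gtN1 : 0 < I1 -> 0 < I3 -> -1 < Defs.eta I1 I3.
Proof.
move=> I1_gt0 I3_gt0; have : 0 < I1 / I3 by rewrite divr_gt0.
by rewrite /Defs.eta; lra.
Qed.

Lemma sqr_hbar3_le1 (h : 'rV[R]_3) : hbar h 3 ^+ 2 <= 1.
Proof.
rewrite /hbar; have [->|h_neq0] := eqVneq (hnorm h) 0; first by rewrite invr0 mulr0 expr0n.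
rewrite expr_div_n ler_pdivrMr ?exprn_gt0 ?lt_def ?h_neq0 ?sqrtr_ge0 // mul1r.
rewrite sqr_sqrtr ?addr_ge0 ?sqr_ge0 // lerDr.
by rewrite addr_ge0 ?sqr_ge0.
Qed.

Lemma inC_hnorm_gt0 (h : 'rV[R]_3) : inC I1 I3 h -> 0 < hnorm h.
Proof.
move=> hC; rewrite /hnorm sqrtr_gt0 ltNge; apply/negP => sum_le0; move: hC.
have := sqr_ge0 (hc h 1); have := sqr_ge0 (hc h 2); have := sqr_ge0 (hc h 3).
move=> s3 s2 s1; have z1 : hc h 1 ^+ 2 = 0 by lra.
have z2 : hc h 2 ^+ 2 = 0 by lra.
have z3 : hc h 3 ^+ 2 = 0 by lra.
by rewrite /inC z1 z2 z3 addr0 !mul0r addr0 => /esym/eqP; rewrite oner_eq0.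
Qed.
End Ellipsoid.

Lemma lt_fine_min (R : realType) (a x : R) (L : \bar R) :
  (-oo < L)%E -> x < fine (Order.min a%:E L) -> x < a /\ (x%:E < L)%E.
Proof.
case: L => [l | | //] _ /=; last by rewrite minEle leey /= => xa; split; rewrite ?ltry.
rewrite -lte_fin fineK ?fin_numE //; last by case: (leP a%:E l%:E).
by rewrite lt_min => /andP[? ?]; rewrite -lte_fin.
Qed.

Theorem mainTheorem7 (R : realType) (p : nat) (q : int) (I1 I3 : R) :
  (2 <= p)%N -> coprimez p%:Z q -> 0 < I1 -> 0 < I3 ->
  forall h : 'rV[R]_3, inC I1 I3 h ->
    ((t_max p I1 I3 h)%:E <= t_conj I1 I3 h)%E.
Proof.
move=> p_ge2 _ I1_gt0 I3_gt0 h hC.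
have h_gt0 := inC_hnorm_gt0 hC; have et_gt := eta_gtN1 I1_gt0 I3_gt0.
apply: le_ereal_inf_tmp => _ [t [t_gt0 [gd [v [v_neq0 dv]]]] <-].
rewrite lee_fin leNgt; apply/negP => t_lt.
set tau := t * hnorm h / (2 * I1).
have I2_gt0 : 0 < 2 * I1 by rewrite mulr_gt0.
have tau_lt : tau < fine (Order.min pi%:E (tau_ell p (Defs.eta I1 I3) (hbar h 3))).
  by move: t_lt; rewrite /t_max ltr_pdivlMr // ltr_pdivrMr //; lra.
have [tau_lt_pi tau_lt_ell] := lt_fine_min (lt_le_trans ltNy0 (tau_ell_ge0 _ _ _)) tau_lt.
have tau_gt0 : 0 < tau by rewrite /tau divr_gt0 // mulr_gt0.
have F_gt0 : 0 < conj_factor (Defs.eta I1 I3) (hbar h 3) tau.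
  apply: conj_factor_gt0; rewrite ?sqr_hbar3_le1 ?tau_gt0 // => et_gt0.
  by rewrite -lee_fin ltW // (lt_le_trans tau_lt_ell) ?tau_ell_le_pihalf.
have m_gt0 := add1_mul_sqr_gt0 et_gt (sqr_hbar3_le1 h).
have S_gt0 : 0 < sin tau by rewrite sin_gt0_pi // tau_gt0.
have := gam_differential_injective t_gt0 I1_gt0 h_gt0
  (lt0r_neq0 S_gt0) (lt0r_neq0 F_gt0) (lt0r_neq0 m_gt0) gd dv.
by move/eqP; rewrite (negbTE v_neq0).
Qed.
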